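(* Let $N_{\mathcal{C}}\ge 1$ and let $(X_1,Y_1),\dots,(X_{N_{\mathcal{C}}},Y_{N_{\mathcal{C}}}),(X',Y')$ be exchangeable random variables taking values in $\mathcal{X}\times\mathcal{Y}$. Let $K\ge 1$ and let $s_k:\mathcal{X}\times\mathcal{Y}\to\mathbb{R}$, $k=1,\dots,K$, be fixed measurable maps, and set $s(x,y):=(s_1(x,y),\dots,s_K(x,y))\in\mathbb{R}^K$. Let $\{\mathcal{A}_t\}_{t\ge 0}$ be a fixed (non-random) family of subsets of $\mathbb{R}^K$ that is nested, i.e. $\mathcal{A}_{t_1}\subseteq\mathcal{A}_{t_2}$ whenever $0\le t_1\le t_2$, and let $\lesssim$ be the pre-order on $\mathbb{R}^K$ it induces: $a\lesssim b$ if and only if for every $t\ge 0$, $b\in\mathcal{A}_t$ implies $a\in\mathcal{A}_t$. Let $\alpha\in(0,1)$, write $S_i:=s(X_i,Y_i)$ for $i=1,\dots,N_{\mathcal{C}}$, and let $S_{(1)}\lesssim S_{(2)}\lesssim\dots\lesssim S_{(N_{\mathcal{C}})}$ be the calibration scores $\{S_i\}$ sorted according to $\lesssim$. Define $$\mathcal{Q}(\alpha):=\{v\in\mathbb{R}^K : v\lesssim S_{(\lceil (N_{\mathcal{C}}+1)(1-\alpha)\rceil)}\},$$ with the convention $\mathcal{Q}(\alpha)=\mathbb{R}^K$ if $\lceil (N_{\mathcal{C}}+1)(1-\alpha)\rceil> N_{\mathcal{C}}$, and for $x\in\mathcal{X}$ let $\mathcal{C}(x):=\{y\in\mathcal{Y}: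 s(x,y)\in\mathcal{Q}(\alpha)\}$. Then $$\mathbb{P}\big(Y'\in\mathcal{C}(X')\big)\ge 1-\alpha .$$
   Context: This is a multivariate-score extension of split conformal prediction: $(X_i,Y_i)$ form the calibration set, $(X',Y')$ is the test point, and the probability is over the joint distribution of calibration and test data. Because the sets $\mathcal{A}_t$ are nested, the relation $\lesssim$ is a total pre-order (any two vectors are comparable, though distinct vectors may be equivalent), so the calibration scores can be sorted under it (ties broken arbitrarily). Equivalently, $a\lesssim b$ iff $t(a)\le t(b)$ in the sense of the sets $\{t: a\in\mathcal{A}_t\}$, where $t(v):=\inf\{t\ge0: v\in\mathcal{A}_t\}$. *)

From HB Require Import structures.
From mathcomp Require Import all_boot all_order all_algebra all_fingroup.
From mathcomp Require Import all_classical all_reals all_analysis.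
Unset Printing Implicit Defensive.
Import Order.TTheory GRing.Theory Num.Theory.
Local Open Scope classical_set_scope.
Local Open Scope ring_scope.

Section Defs.
Context {R : realType}.

Definition prod_rect {dT : measure_display} (T : measurableType dT) (n : nat)
  : set (set ('I_n -> T)) :=
  [set B | exists C : 'I_n -> set T,
     (forall i, measurable (C i)) /\ B = [set z | forall i, C i (z i)]].

Definition prod_measurable {dT : measure_display} (T : measurableType dT) (n : nat)
  : set (set ('I_n -> T)) := <<s prod_rect T n >>.

Definition exchangeable {d : measure_display} {Omega : measurableType d}
  (P : probability Omega R) {dT : measure_display} {T : measurableType dT}
  {n : nat} (Z : 'I_n -> Omega -> T) : Prop :=
  forall (sigma : {perm 'I_n}) (B : set ('I_n -> T)),
    prod_measurable T n B ->
    P [set w | B (fun i => Z i w)] = P [set w | B (fun i => Z (sigma i) w)].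

Definition preord {K : nat} (A : R -> set ('I_K -> R)) (a b : 'I_K -> R) : Prop :=
  forall t, 0 <= t -> A t b -> A t a.

Definition score {T : Type} {K : nat} (s : 'I_K -> T -> R) (z : T) : 'I_K -> R :=
  fun k => s k z.

(* the j-th (0-based) element of the scores sorted according to the pre-order
   (ties broken arbitrarily by the sorting algorithm) *)
Definition order_stat {K : nat} (A : R -> set ('I_K -> R))
  (S : seq ('I_K -> R)) (j : nat) : 'I_K -> R :=
  nth (fun=> 0) (sort (fun a b => `[< preord A a b >]) S) j.

Definition qidx (N : nat) (alpha : R) : int := Num.ceil ((N.+1)%:R * (1 - alpha)).

Definition Qset {K : nat} (A : R -> set ('I_K -> R)) (N : nat)
  (S : seq ('I_K -> R)) (alpha : R) : set ('I_K -> R) :=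
  if (N%:Z < qidx N alpha)%R then setT
  else [set v | preord A v (order_stat A S (`|qidx N alpha|%N).-1)].

Definition conf_set {X Y : Type} {K : nat} (s : 'I_K -> X * Y -> R)
  (A : R -> set ('I_K -> R)) (alpha : R) {N : nat} (cal : 'I_N -> X * Y)
  (x : X) : set Y :=
  [set y | Qset A N (map (fun i => score s (cal i)) (enum 'I_N)) alpha
             (score s (x, y))].

(* data vector z : 'I_N.+1 -> X * Y: calibration points are z i for i < N,
   the test point is z ord_max *)
Definition calib {T : Type} {N : nat} (z : 'I_N.+1 -> T) : 'I_N -> T :=
  fun i => z (widen_ord (leqnSn N) i).

Definition covered {X Y : Type} {K : nat} (s : 'I_K -> X * Y -> R)
  (A : R -> set ('I_K -> R)) (alpha : R) {N : nat} (z : 'I_N.+1 -> X * Y) : Prop :=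
  conf_set s A alpha (calib z) (z ord_max).1 (z ord_max).2.

End Defs.

(* Swap the test point with each index j in turn.  By exchangeability the N+1
   swapped coverage events all have the probability of the original one.
   Pointwise, a score lands in Q(alpha) as soon as fewer than
   q = ceil((N+1)(1-alpha)) of the other N scores lie strictly below it, and in
   any total preorder on N+1 points at least min(q, N+1) of them have fewer than
   q points strictly below.  Hence (N+1) P(cover) >= min(q, N+1)
   >= (N+1)(1-alpha). *)
From HB Require Import structures.
From mathcomp Require Import all_boot all_order all_algebra all_fingroup.
From mathcomp Require Import all_classical all_reals all_analysis.
From mathcomp Require Import measurable_realfun.
Import Order.TTheory GRing.Theory Num.Theory.
Local Open Scope classical_set_scope.
Local Open Scope ring_scope.

Section TotalPreorder.
Context {T : Type} (r : rel T).
Hypotheses (r_refl : reflexive r) (r_trans : transitive r) (r_total : total r).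

Lemma le_nth_sort (L : seq T) (m : nat) (x x0 : T) :
  (m < size L)%N -> (count (fun y => ~~ r x y) L <= m)%N ->
  r x (nth x0 (sort r L) m).
Proof.
move=> mL count_le; apply/negPn/negP => not_le_xm.
set S := sort r L.
have size_S : size S = size L by rewrite size_sort.
have prefix_below : all (fun y => ~~ r x y) (take m.+1 S).
  apply/(all_nthP x0) => k; rewrite size_takel ?size_S // => km.
  rewrite nth_take //; apply: contra not_le_xm => /r_trans; apply.
  apply: (sorted_leq_nth r_trans r_refl) => //; rewrite ?inE ?size_S //.
  - exact: sort_sorted.
  - exact: leq_trans km mL.
have : (m.+1 <= count (fun y => ~~ r x y) L)%N.
  rewrite -(count_sort r) -/S -(cat_take_drop m.+1 S) count_cat.
  move: prefix_below; rewrite all_count => /eqP ->.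
  by rewrite size_takel ?size_S ?leq_addr.
by rewrite ltnNge count_le.
Qed.

Section Rank.
Context {I : finType} (f : I -> T).

Definition rank (j : I) : nat := #|[pred i | ~~ r (f j) (f i)]|.

(* Minimal counterexample: the elements strictly below an element of minimal
   rank among those of rank >= q all have rank < q. *)
Lemma leq_card_rank_lt (q : nat) :
  (q <= #|I|)%N -> (q <= #|[pred j | (rank j < q)%N]|)%N.
Proof.
move=> qI; rewrite leqNgt; apply/negP => few_small.
have [j0 j0_big] : exists j0, j0 \in [pred j | ~~ (rank j < q)%N].
  apply/card_gt0P; rewrite -(leq_add2l #|[pred j | (rank j < q)%N]|) addn1.
  have := cardC [pred j | (rank j < q)%N]; rewrite /predC => ->.
  exact: leq_trans few_small qI.
case: (arg_minnP rank j0_big) => j /=; rewrite -leqNgt => j_big j_min.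
suff : (rank j <= #|[pred j | (rank j < q)%N]|)%N.
  by move=> /(leq_trans j_big); rewrite leqNgt (leq_trans few_small).
apply: subset_leq_card; apply/fintype.subsetP => i; rewrite !inE => i_below.
rewrite ltnNge; apply/negP => i_big; have := j_min i; rewrite /= -leqNgt.
move=> /(_ i_big); rewrite leqNgt => /negP; apply.
apply: proper_card; apply/properP; split.
  apply/fintype.subsetP => k; rewrite !inE; apply: contra => r_jk.
  have r_ij : r (f i) (f j).
    by case/orP: (r_total (f i) (f j)) => // r_ji; rewrite r_ji in i_below.
  exact: r_trans r_ij r_jk.
by exists i; rewrite !inE ?r_refl.
Qed.

Lemma minn_leq_card_rank_lt (q : nat) :
  (minn q #|I| <= #|[pred j | (rank j < q)%N]|)%N.
Proof.
apply: leq_trans (leq_card_rank_lt _ (geq_minr q #|I|)) _.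
apply: subset_leq_card; apply/fintype.subsetP => j; rewrite !inE.
by move=> /leq_trans; apply; exact: geq_minl.
Qed.

End Rank.
End TotalPreorder.

Section ScoreOrder.
Context {R : realType} {K : nat} (A : R -> set ('I_K -> R)).
Hypothesis A_nested : forall t1 t2 : R, 0 <= t1 -> t1 <= t2 -> A t1 `<=` A t2.

Definition preordb : rel ('I_K -> R) := fun a b => `[< preord A a b >].

Lemma preordb_refl : reflexive preordb.
Proof. by move=> a; apply/asboolP. Qed.

Lemma preordb_trans : transitive preordb.
Proof.
by move=> b a c /asboolP ab /asboolP bc; apply/asboolP => t t0 /(bc t t0) /(ab t t0).
Qed.

Lemma preordb_total : total preordb.
Proof.
move=> a b; apply/orP; case: (pselect (preord A a b)) => [ab|not_ab].
  by left; apply/asboolP.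
right; apply/asboolP => t' t'0 at'.
have [t [t0 bt not_at]] : exists t, [/\ 0 <= t, A t b & ~ A t a].
  apply: contrapT => no_t; apply: not_ab => t t0 bt.
  by apply: contrapT => not_at; apply: no_t; exists t.
case: (leP t t') => [tt'|t't]; first exact: A_nested tt' _ bt.
by exfalso; apply: not_at; apply: A_nested (ltW t't) _ at'.
Qed.

Lemma Qset_of_count (N : nat) (S : seq ('I_K -> R)) (alpha : R) (v : 'I_K -> R) :
  size S = N -> (count (fun u => ~~ preordb v u) S)%:Z < qidx N alpha ->
  Qset A N S alpha v.
Proof.
move=> size_S count_lt; rewrite /Qset; case: ifP => // /negbT; rewrite -leNgt => qN.
have q_pos : 0 < qidx N alpha by apply: le_lt_trans count_lt.
set q := `|qidx N alpha|%N.
have qE : qidx N alpha = q%:Z by rewrite gtz0_abs.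
rewrite qE ltz_nat in count_lt q_pos; rewrite qE lez_nat in qN.
apply/asboolP; apply: (le_nth_sort _ preordb_refl preordb_trans preordb_total).
  by rewrite size_S prednK.
by rewrite -ltnS prednK.
Qed.

Lemma covered_tperm {X Y : Type} (s : 'I_K -> X * Y -> R) (alpha : R) {N : nat}
  (z : 'I_N.+1 -> X * Y) (j : 'I_N.+1) :
  (rank preordb (fun i => score s (z i)) j)%:Z < qidx N alpha ->
  covered s A alpha (fun i => z (tperm j ord_max i)).
Proof.
move=> rank_lt; rewrite /covered /conf_set /= tpermR -surjective_pairing.
apply: Qset_of_count; first by rewrite size_map size_enum_ord.
apply: le_lt_trans rank_lt; rewrite lez_nat; apply: eq_leq.
rewrite count_map -sum1_count big_enum_cond /= /rank -sum1_card.
rewrite [RHS](reindex_inj (@perm_inj _ (tperm j ord_max))) /= [RHS]big_mkcond.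
rewrite big_ord_recr /= tpermR inE /= preordb_refl addn0 big_mkcond.
by apply: eq_bigr => i _; rewrite inE.
Qed.

End ScoreOrder.

Lemma measurable_prod_preimage {d : measure_display} {Omega : measurableType d}
  {dT : measure_display} {T : measurableType dT} {n : nat} (f : Omega -> 'I_n -> T) :
  (forall i, measurable_fun setT (fun w => f w i)) ->
  forall B, prod_measurable T n B -> measurable [set w | B (f w)].
Proof.
move=> mf B mB; apply: (mB [set B | measurable [set w | B (f w)]]); split.
- split => /=.
  + by rewrite [X in measurable X](_ : _ = set0) //; apply/seteqP; split => w.
  + move=> C mC; rewrite [X in measurable X](_ : _ = ~` [set w | C (f w)]).
      exact: measurableC.
    by apply/seteqP; split => w /=; rewrite /setD /=; [case|].
  + move=> F mF; rewrite [X in measurable X](_ : _ = \bigcup_k [set w | F k (f w)]).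
      exact: bigcupT_measurable.
    by apply/seteqP; split => w.
- move=> _ [C [mC ->]] /=.
  rewrite [X in measurable X](_ : _ = \bigcap_(i in setT) ((fun w => f w i) @^-1` C i)).
    apply: fin_bigcap_measurable; first exact: finite_finset.
    by move=> i _; rewrite -[_ @^-1` _]setTI; apply: mf.
  by apply/seteqP; split => w /= wC i; [move=> _|]; apply: wC.
Qed.

Lemma le_sum_prob_of_card {d : measure_display} {Omega : measurableType d}
  {R : realType} (P : probability Omega R) {I : finType}
  (E : I -> set Omega) (c : nat) :
  (forall j, measurable (E j)) ->
  (forall w, (c <= #|[pred j | w \in E j]|)%N) ->
  (c%:R%:E <= \sum_(j : I) P (E j))%E.
Proof.
move=> mE c_le.
have mindic j : measurable_fun setT (fun w => (\1_(E j) w)%:E : \bar R).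
  exact/measurable_EFinP/measurable_indic.
have -> : \sum_(j : I) P (E j) = (\int[P]_w \sum_(j : I) (\1_(E j) w)%:E)%E.
  rewrite ge0_integral_sum //.
  by apply: eq_bigr => j _; rewrite integral_indic // setIT.
rewrite -[leLHS]mule1 -(probability_setT P) -integral_cst //.
apply: ge0_le_integral => //.
- by move=> w _; rewrite lee_fin.
- exact: emeasurable_sum.
- move=> w _; rewrite sumEFin lee_fin.
  under eq_bigr => j _ do rewrite indicE.
  by rewrite -natr_sum ler_nat -big_mkcond sum1dep_card cardsE; apply: c_le.
Qed.

Lemma minn_qidx_ge {R : realType} (N : nat) (alpha : R) :
  0 < alpha -> N.+1%:R * (1 - alpha) <= (minn `|qidx N alpha| N.+1)%:R :> R.
Proof.
move=> alpha_pos; case: leqP => _.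
  apply: le_trans (ceil_ge _) _.
  by rewrite natr_absz ler_int ler_norm.
by rewrite ler_piMr // lerBlDr lerDl ltW.
Qed.

Theorem theorem1 (R : realType) (d : measure_display) (Omega : measurableType d)
  (P : probability Omega R)
  (dX dY : measure_display) (X : measurableType dX) (Y : measurableType dY)
  (N : nat) (Z : 'I_N.+1 -> Omega -> X * Y)
  (K : nat) (s : 'I_K -> X * Y -> R) (A : R -> set ('I_K -> R)) (alpha : R) :
  (1 <= N)%N ->
  (forall i, measurable_fun setT (Z i)) ->
  exchangeable P Z ->
  (1 <= K)%N ->
  (forall k, measurable_fun setT (s k)) ->
  (forall t1 t2 : R, 0 <= t1 -> t1 <= t2 -> A t1 `<=` A t2) ->
  0 < alpha < 1 ->
  prod_measurable (X * Y)%type N.+1 (@covered R X Y K s A alpha N) ->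
  ((1 - alpha)%:E <=
   P [set w | conf_set s A alpha (calib (fun i => Z i w))
                (Z ord_max w).1 (Z ord_max w).2])%E.
Proof.
move=> _ mZ exch _ _ A_nested /andP[alpha_pos alpha_lt1] mcov.
set q := `|qidx N alpha|%N.
have qE : qidx N alpha = q%:Z.
  by rewrite gtz0_abs // ceil_gt0 mulr_gt0 // subr_gt0.
pose E j := [set w | covered s A alpha (fun i => Z (tperm j ord_max i) w)].
have mE j : measurable (E j).
  by apply: measurable_prod_preimage mcov => i; apply: mZ.
have PE j : P (E j) = P [set w | covered s A alpha (fun i => Z i w)].
  by rewrite (exch (tperm j ord_max)).
have many_covered w : (minn q N.+1 <= #|[pred j | w \in E j]|)%N.
  have := minn_leq_card_rank_lt _ (preordb_refl A) (preordb_trans A)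
    (preordb_total _ A_nested) (fun i => score s (Z i w)) q.
  rewrite card_ord => /leq_trans; apply; apply: subset_leq_card.
  apply/fintype.subsetP => j; rewrite !inE => rank_lt.
  by apply: (covered_tperm _ A_nested s alpha (fun i => Z i w)); rewrite qE ltz_nat.
have := le_sum_prob_of_card P E _ mE many_covered.
rewrite (eq_bigr _ (fun j _ => PE j)) sumr_const card_ord.
move=> sum_bound; rewrite -(lee_pmul2l (x := N.+1%:R%:E)) ?ltr0n // -EFinM mule_natl.
by apply: le_trans sum_bound; rewrite lee_fin; apply: minn_qidx_ge.
Qed.
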